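(* Let $\tau$ be an infinite cardinal and $X$ a space with $\chi(X)\le\tau$. There is no continuous, effective and transitive action on $X$ of a topological group $G$ with $\psi(G)>\tau$ and $\mathrm{inv}(G)\le\tau$.
   Context: All spaces are Tychonoff. An action of $G$ on $X$ is effective if the only $g\in G$ with $gx=x$ for all $x\in X$ is the unit, and transitive if $Gx=X$. $\psi(G)$ is the pseudocharacter of $G$. The invariance number $\mathrm{inv}(G)$ is the least infinite cardinal $\tau$ such that for every neighborhood $U$ of the unit there is a family $\gamma$ of at most $\tau$ neighborhoods of the unit such that for each $x\in G$ some $V\in\gamma$ satisfies $xVx^{-1}\subset U$. *)

From HB Require Import structures.
From mathcomp Require Import all_boot all_order all_algebra.
From mathcomp Require Import all_classical all_reals all_analysis.
Set Implicit Arguments. Unset Strict Implicit. Unset Printing Implicit Defensive.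
Import Order.TTheory GRing.Theory Num.Theory.
Local Open Scope classical_set_scope.
Local Open Scope card_scope.

Definition tychonoff_space (T : topologicalType) : Prop :=
  accessible_space T /\ completely_regular_space T.

Definition is_topological_group (G : topologicalType)
    (mul : G -> G -> G) (inv : G -> G) (one : G) : Prop :=
  [/\ (forall x y z, mul x (mul y z) = mul (mul x y) z),
      (forall x, mul one x = x /\ mul x one = x),
      (forall x, mul (inv x) x = one /\ mul x (inv x) = one),
      continuous (fun p : G * G => mul p.1 p.2) &
      continuous inv].

Definition is_continuous_action (G X : topologicalType)
    (mul : G -> G -> G) (one : G) (act : G -> X -> X) : Prop :=
  [/\ (forall x, act one x = x),
      (forall g h x, act (mul g h) x = act g (act h x)) &
      continuous (fun p : G * X => act p.1 p.2)].

Definition effective_action (G X : Type) (one : G) (act : G -> X -> X) : Prop :=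
  forall g, (forall x, act g x = x) -> g = one.

Definition transitive_action (G X : Type) (act : G -> X -> X) : Prop :=
  forall x y : X, exists g, act g x = y.

(* The cardinal tau is represented by (the cardinality of) a type K. *)

Definition character_le (X : topologicalType) (K : Type) : Prop :=
  forall x : X, exists B : set (set X),
    B #<= [set: K] /\
    (forall U, B U -> open U /\ U x) /\
    (forall V, nbhs x V -> exists2 U, B U & U `<=` V).

Definition pseudocharacter_le (X : topologicalType) (K : Type) : Prop :=
  forall x : X, exists g : set (set X),
    g #<= [set: K] /\
    (forall U, g U -> open U /\ U x) /\
    \bigcap_(U in g) U = [set x].

Definition invariance_le (G : topologicalType) (mul : G -> G -> G)
    (inv : G -> G) (one : G) (K : Type) : Prop :=
  forall U, nbhs one U -> exists g : set (set G),
    g #<= [set: K] /\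
    (forall V, g V -> nbhs one V) /\
    (forall x : G, exists2 V, g V & forall v, V v -> U (mul (mul x v) (inv x))).

(* Fix x0 in X and a local base B at x0 with |B| <= tau.  For U in B the set
   W_U = {g | g x0 \in U} is a neighbourhood of the unit, so inv(G) <= tau gives
   a family gam_U of at most tau neighbourhoods of the unit such that every
   conjugate b V b^-1 of some V in gam_U lies in W_U.  If g lies in the
   interiors of all V in gam_U, U in B (at most tau * tau = tau open sets), then
   b g b^-1 x0 lies in every U in B, hence equals x0 as X is T1; by transitivity g
   fixes every point and by effectiveness g = 1.  So the unit is an intersection
   of at most tau open sets, and by homogeneity so is every point: psi(G) <= tau.
   The identity tau * tau = tau is Hessenberg's theorem, proved by Zorn's lemma
   on graphs of injections A * A -> A. *)

From HB Require Import structures.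
From mathcomp Require Import all_boot all_order all_algebra.
From mathcomp Require Import all_classical all_reals all_analysis.
Local Open Scope classical_set_scope.
Local Open Scope card_scope.

Lemma choice_in {T U} (u : U) {A : set T} {R : T -> U -> Prop} :
  (forall x, A x -> exists y, R x y) -> exists f : T -> U, forall x, A x -> R x (f x).
Proof.
move=> AR; have AR' x : exists y, A x -> R x y.
  by have [/AR[y Rxy]|nAx] := pselect (A x); [exists y | exists u].
by have [f Rf] := choice AR'; exists f.
Qed.

Lemma set_inj_card_le {T U} {A : set T} {B : set U} (f : T -> U) :
  set_fun A B f -> set_inj A f -> A #<= B.
Proof. by move=> fAB finj; apply/inj_card_le/unsquash/injfunPex; exists f. Qed.

Lemma card_le_set_inj {T U} (u : U) {A : set T} {B : set U} :
  A #<= B -> exists2 f : T -> U, set_fun A B f & set_inj A f.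
Proof.
pose Up : pointedType :=
  HB.pack U (gen_eqMixin U) (gen_choiceMixin U) (isPointed.Build U u).
by move/(@pcard_leP T Up)/injfunPex.
Qed.

Lemma Zorn_bigcup_sup {T} {P : set (set T)} {A0 : set T} : P A0 ->
  (forall F : set (set T), F `<=` P -> F !=set0 -> total_on F subset ->
    P (\bigcup_(X in F) X)) ->
  exists M, [/\ P M, A0 `<=` M & forall B, M `<` B -> ~ P B].
Proof.
move=> PA0 Pchain.
have [M [PM Mmax]] : exists M, P (A0 `|` M) /\ forall B, M `<` B -> ~ P (A0 `|` B).
  apply: Zorn_bigcup => F FP Ftot.
  have [->|F0] := eqVneq F set0; first by rewrite bigcup_set0 setU0.
  rewrite -bigcupUr; last exact/set0P.
  rewrite -(bigcup_image F (setU A0) id); apply: Pchain.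
  - by move=> _ [B FB <-]; exact: FP.
  - by have /set0P[B FB] := F0; exists (A0 `|` B), B.
  - move=> _ _ [B FB <-] [C FC <-].
    by have [BC|CB] := Ftot _ _ FB FC; [left|right]; apply: setUS.
exists (A0 `|` M); split; [exact: PM | exact: subsetUl |].
move=> B [MB BM] PB; have A0B : A0 `<=` B := subset_trans (@subsetUl _ A0 M) MB.
apply: (Mmax B); last by rewrite setUidr.
split; first exact: subset_trans (@subsetUr _ A0 M) MB.
by move=> BM'; apply: BM; rewrite -(setUidr A0B); exact: setUS.
Qed.

Lemma bigcup_total2 {T} {F : set (set T)} {p q : T} : total_on F subset ->
  (\bigcup_(X in F) X) p -> (\bigcup_(X in F) X) q -> exists2 X, F X & X p /\ X q.
Proof.
move=> Ftot [X FX Xp] [Y FY Yq].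
have [XY|YX] := Ftot _ _ FX FY; first by exists Y => //; split=> //; exact: XY.
by exists X => //; split=> //; exact: YX.
Qed.

Definition partial_inj_graph {T U} (A : set T) (B : set U) (M : set (T * U)) :=
  [/\ M `<=` A `*` B,
    forall a b b', M (a, b) -> M (a, b') -> b = b' &
    forall a a' b, M (a, b) -> M (a', b) -> a = a'].

Lemma partial_inj_graph_bigcup {T U} {A : set T} {B : set U} {F : set (set (T * U))} :
  F `<=` partial_inj_graph A B -> total_on F subset ->
  partial_inj_graph A B (\bigcup_(M in F) M).
Proof.
move=> Fpinj Ftot; split.
- by move=> q [M FM Mq]; have [MAB _ _] := Fpinj M FM; exact: MAB.
- move=> a b b' Uab Uab'; have [M FM [Mab Mab']] := bigcup_total2 Ftot Uab Uab'.
  by have [_ Mfun _] := Fpinj M FM; exact: Mfun Mab Mab'.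
- move=> a a' b Uab Ua'b; have [M FM [Mab Ma'b]] := bigcup_total2 Ftot Uab Ua'b.
  by have [_ _ Minj] := Fpinj M FM; exact: Minj Mab Ma'b.
Qed.

Lemma card_le_total {T U} (A : set T) (B : set U) : A #<= B \/ B #<= A.
Proof.
have [->|/set0P[a0 _]] := eqVneq A set0; first by left; exact: card_ge0.
have [->|/set0P[b0 _]] := eqVneq B set0; first by right; exact: card_ge0.
have [M [[MAB Mfun Minj] Mmax]] := Zorn_bigcup (fun F => @partial_inj_graph_bigcup _ _ A B F).
have [Adom|/existsNP[a /not_implyP[Aa /forallNP aM]]] :=
  pselect (forall a, A a -> exists b, M (a, b)).
  left; have [f Mf] := choice_in b0 Adom.
  apply: (set_inj_card_le f); first by move=> a /Mf /MAB[].
  by move=> a a' /set_mem/Mf Maf /set_mem/Mf Ma'f faa'; apply: Minj Maf _; rewrite faa'.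
have [Bdom|/existsNP[b /not_implyP[Bb /forallNP Mb]]] :=
  pselect (forall b, B b -> exists a, M (a, b)).
  right; have [f Mf] := choice_in a0 Bdom.
  apply: (set_inj_card_le f); first by move=> b /Mf /MAB[].
  by move=> b b' /set_mem/Mf Mfb /set_mem/Mf Mfb' fbb'; apply: Mfun Mfb _; rewrite fbb'.
exfalso; apply: (Mmax (M `|` [set (a, b)])).
  split; first exact: subsetUl.
  by move=> /(_ (a, b) (or_intror erefl)) /aM.
split.
- by move=> q [/MAB //|->].
- move=> x y y' [Mxy|[? ?]] [Mxy'|[? ?]]; subst => //.
  + exact: Mfun Mxy Mxy'.
  + by case/aM: Mxy.
  + by case/aM: Mxy'.
- move=> x x' y [Mxy|[? ?]] [Mx'y|[? ?]]; subst => //.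
  + exact: Minj Mxy Mx'y.
  + by case/Mb: Mxy.
  + by case/Mb: Mx'y.
Qed.

Section Hessenberg.
Variable T : Type.
Implicit Types (A E S : set T) (G : set ((T * T) * T)).

Definition diag_dom G : set T := [set x | exists a, G ((x, x), a)].

(* [G] is the graph of an injection of [A `*` A] into [A]; when it is one, [A]
   is recovered as [diag_dom G]. *)
Definition square_inj_graph A G := [/\
  forall p a b, G (p, a) -> G (p, b) -> a = b,
  forall p q a, G (p, a) -> G (q, a) -> p = q,
  forall p a, G (p, a) -> (A `*` A) p /\ A a &
  forall p, (A `*` A) p -> exists a, G (p, a)].

Definition square_inj G := square_inj_graph (diag_dom G) G.

Lemma diag_dom_square_inj_graph {A G} : square_inj_graph A G -> diag_dom G = A.
Proof.
case=> _ _ Gdom Gtot; apply/seteqP; split=> x; first by case=> a /Gdom[[]].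
by move=> Ax; exact: Gtot (x, x) (conj Ax Ax).
Qed.

Lemma square_inj_graphW {A G} : square_inj_graph A G -> square_inj G.
Proof. by move=> GA; rewrite /square_inj (diag_dom_square_inj_graph GA). Qed.

Lemma square_inj_graph_card_le {A G} : square_inj_graph A G -> A `*` A #<= A.
Proof.
case=> _ Ginj Gdom Gtot.
have -> : A `*` A = fst @` G.
  apply/seteqP; split=> [p /Gtot[a Gpa]|_ [[p a] /Gdom[Ap _] <-]] //.
  by exists (p, a).
apply: card_le_trans (card_image_le _ _) _.
apply: (set_inj_card_le snd) => [[p a] /Gdom[] //|[p a] [q b]].
by rewrite !inE /= => Gpa Gqb ab; subst b; rewrite (Ginj p q a).
Qed.

Lemma square_inj_bigcup {F : set (set ((T * T) * T))} :
  F `<=` square_inj -> total_on F subset -> square_inj (\bigcup_(G in F) G).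
Proof.
move=> Fsq Ftot; have diagU G : F G -> diag_dom G `<=` diag_dom (\bigcup_(G in F) G).
  by move=> FG x [a Gxa]; exists a, G.
split.
- move=> p a b Upa Upb; have [G FG [Gpa Gpb]] := bigcup_total2 Ftot Upa Upb.
  by have [Gf _ _ _] := Fsq G FG; exact: Gf Gpa Gpb.
- move=> p q a Upa Uqa; have [G FG [Gpa Gqa]] := bigcup_total2 Ftot Upa Uqa.
  by have [_ Gi _ _] := Fsq G FG; exact: Gi Gpa Gqa.
- move=> p a [G FG Gpa]; have [_ _ Gdom _] := Fsq G FG.
  by have [[Gp1 Gp2] Ga] := Gdom p a Gpa; split; [split|]; exact: diagU FG _ _.
- move=> [x y] [[a Uxa] [b Uyb]]; have [G FG [Gxa Gyb]] := bigcup_total2 Ftot Uxa Uyb.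
  have [_ _ _ Gtot] := Fsq G FG.
  have [c Gxyc] := Gtot (x, y) (conj (ex_intro _ a Gxa) (ex_intro _ b Gyb)).
  by exists c, G.
Qed.

Lemma square_inj_graph_extend {A E M} {n : T * T -> T} :
  let D := (A `|` E) `*` (A `|` E) in
  square_inj_graph A M -> A `&` E = set0 -> set_fun D E n -> set_inj D n ->
  square_inj_graph (A `|` E) (M `|` [set q | (D `\` A `*` A) q.1 /\ q.2 = n q.1]).
Proof.
move=> D [Mfun Minj Mdom Mtot] AE0 nDE ninj.
have AE a : A a -> ~ E a by move=> Aa Ea; have : (A `&` E) a by []; rewrite AE0.
split.
- move=> p a b [Mpa|[[_ nAp] /= ->]] [Mpb|[[_ nAp'] /= ->]] //.
  + exact: Mfun Mpa Mpb.
  + by case: nAp'; case: (Mdom _ _ Mpa).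
  + by case: nAp; case: (Mdom _ _ Mpb).
- move=> p q a [Mpa|[[Dp _] /= ->]] [Mqa|[[Dq _] /= nq]].
  + exact: Minj Mpa Mqa.
  + by case: (AE a); [case: (Mdom _ _ Mpa) | rewrite nq; exact: nDE].
  + by case: (AE (n p)); [case: (Mdom _ _ Mqa) | exact: nDE].
  + by apply: ninj; rewrite ?inE.
- move=> p a [/Mdom[[Ap1 Ap2] Aa]|[[Dp _] /= ->]].
    by split; [split|]; left.
  by split=> //; right; exact: nDE.
- move=> p Dp; have [AAp|nAAp] := pselect ((A `*` A) p).
    by have [a Mpa] := Mtot p AAp; exists a; left.
  by exists (n p); right.
Qed.

Lemma card_setU_square_le {A S a0 a1} : a0 <> a1 -> A a0 -> A a1 ->
  A `*` A #<= A -> S `\` A #<= A -> (A `|` S) `*` (A `|` S) #<= A.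
Proof.
move=> a01 Aa0 Aa1 /(card_le_set_inj a0)[h hA hinj] /(card_le_set_inj a0)[f fA finj].
pose c z := if `[< A z >] then (z, a0) else (f z, a1).
have cA z : (A `|` S) z -> (A `*` A) (c z).
  rewrite /c; case: asboolP => [Az _|nAz [//|Sz]]; first by split.
  by split=> //; exact: fA.
have cinj : set_inj (A `|` S) c.
  move=> z z'; rewrite !inE /c.
  case: asboolP => Az; case: asboolP => Az' ASz ASz' //=; first by case=> ->.
  - by case=> _ /a01.
  - by case=> _ /esym/a01.
  - case; apply: finj; rewrite inE; split=> //.
    + by case: ASz.
    + by case: ASz'.
pose k z := h (c z).
have kA z : (A `|` S) z -> A (k z) by move/cA/hA.
have kinj : set_inj (A `|` S) k.
  move=> z z' ASz ASz' kzz'; apply: (cinj _ _ ASz ASz').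
  by apply: (hinj _ _ _ _ kzz'); rewrite inE; [exact: cA (set_mem ASz)|exact: cA (set_mem ASz')].
have kAA u v : (A `|` S) u -> (A `|` S) v -> (k u, k v) \in A `*` A.
  by move=> ASu ASv; rewrite inE; split; apply: kA.
apply: (set_inj_card_le (fun p => h (k p.1, k p.2))).
  by move=> [x y] [ASx ASy]; apply: hA; split; apply: kA.
move=> [x y] [x' y']; rewrite !inE => -[ASx ASy] [ASx' ASy'] /= hxy.
case: (hinj _ _ (kAA _ _ ASx ASy) (kAA _ _ ASx' ASy') hxy) => kxx' kyy'.
by congr (_, _); apply: kinj; rewrite ?inE.
Qed.

Hypothesis Tinf : infinite_set [set: T].

Lemma square_inj_seed : exists G0 a0 a1,
  [/\ square_inj G0, a0 <> a1, diag_dom G0 a0 & diag_dom G0 a1].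
Proof.
have [t0 _] := infinite_setN0 Tinf.
have [e _ einj] := card_le_set_inj t0 (iffLR (infiniteP _) Tinf).
have {}einj : injective e by move=> i j; apply: einj; rewrite inE.
pose G0 := [set q | exists i j, q = ((e i, e j), e (pickle (i, j)))].
have G0sq : square_inj_graph (range e) G0.
  split.
  - by move=> p a b [i [j [-> ->]]] [i' [j' [/einj <- /einj <- ->]]].
  - move=> p q a [i [j [-> ->]]] [i' [j' [->]]].
    by move=> /einj/(pcan_inj pickleK) [-> ->].
  - by move=> p a [i [j [-> ->]]]; split; [split|]; eexists.
  - by move=> [x y] /= [[i _ <-] [j _ <-]]; exists (e (pickle (i, j))), i, j.
exists G0, (e 0), (e 1); rewrite (diag_dom_square_inj_graph G0sq).
by split; [exact: square_inj_graphW G0sq | move/einj | exists 0 | exists 1].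
Qed.

Theorem card_setXTT_le : [set: T * T] #<= [set: T].
Proof.
have [G0 [a0 [a1 [G0sq a01 G0a0 G0a1]]]] := square_inj_seed.
have [M [Msq G0M Mmax]] :=
  Zorn_bigcup_sup G0sq (fun F FP _ => square_inj_bigcup FP).
pose A := diag_dom M.
have [Aa0 Aa1] : A a0 /\ A a1.
  by split; [case: G0a0 | case: G0a1] => a /G0M; exists a.
have AA := square_inj_graph_card_le Msq.
have [nAA|AnA] := card_le_total (~` A) A.
  have -> : [set: T * T] = (A `|` ~` A) `*` (A `|` ~` A) by rewrite setUv setXTT.
  have nAA' : ~` A `\` A #<= A := card_le_trans (subset_card_le (@subDsetl _ _ _)) nAA.
  exact: card_le_trans (card_setU_square_le a01 Aa0 Aa1 AA nAA') (card_leT A).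
(* Otherwise [A] embeds into its complement, and [M] extends to a graph on
   [A `|` g @` A], contradicting maximality. *)
have [g gAnA ginj] := card_le_set_inj a0 AnA.
pose E := g @` A.
have AE0 : A `&` E = set0.
  by apply/seteqP; split=> // x [Ax [a Aa gax]]; apply: (gAnA a Aa); rewrite gax.
have EA : E `\` A #<= A.
  exact: card_le_trans (subset_card_le (@subDsetl _ _ _)) (card_image_le g A).
have AE : A #<= E by have /card_eqPle[] := inj_card_eq ginj.
have [n nDE ninj] :=
  card_le_set_inj a0 (card_le_trans (card_setU_square_le a01 Aa0 Aa1 AA EA) AE).
have Mext := square_inj_graph_extend Msq AE0 nDE ninj.
exfalso; apply: (Mmax _ _ (square_inj_graphW Mext)); split; first exact: subsetUl.
have nAga0 : ~ A (g a0) := gAnA a0 Aa0.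
have AEga0 : (A `|` E) (g a0) by right; exists a0.
move=> /(_ ((g a0, g a0), n (g a0, g a0))) Mnew.
have : M ((g a0, g a0), n (g a0, g a0)).
  by apply: Mnew; right; split=> //; split=> // -[].
by have [_ _ Mdom _] := Msq => /Mdom[[/nAga0]].
Qed.

End Hessenberg.

Lemma card_le_sigma {K T U : Type} {A : set T} {F : T -> set U} :
  infinite_set [set: K] -> A #<= [set: K] -> (forall a, A a -> F a #<= [set: K]) ->
  [set p | A p.1 /\ F p.1 p.2] #<= [set: K].
Proof.
move=> Kinf AK FK; have [k0 _] := infinite_setN0 Kinf.
have [i _ iinj] := card_le_set_inj k0 AK.
have Finj a : A a -> exists ja : U -> K, set_inj (F a) ja.
  by move/FK/(card_le_set_inj k0) => [ja _ jainj]; exists ja.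
have [j jinj] := choice_in (fun=> k0) Finj.
apply: (card_le_trans _ (@card_setXTT_le K Kinf)).
apply: (set_inj_card_le (fun p => (i p.1, j p.1 p.2))) => // -[a u] [a' u'].
rewrite !inE => -[/= Aa Fu] [/= Aa' Fu'] [ia ju].
have aa' : a = a' by apply: iinj; rewrite ?inE.
by subst a'; congr (_, _); apply: (jinj a Aa); rewrite ?inE.
Qed.

Lemma continuous_sectionl {A B C : topologicalType} {h : A * B -> C} (b : B) :
  continuous h -> continuous (fun a => h (a, b)).
Proof.
move=> hc a; apply: (@continuous_comp _ _ _ (fun a => (a, b)) h); last exact: hc.
exact: cvg_pair cvg_id (cvg_cst b).
Qed.

Lemma continuous_sectionr {A B C : topologicalType} {h : A * B -> C} (a : A) :
  continuous h -> continuous (fun b => h (a, b)).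
Proof.
move=> hc b; apply: (@continuous_comp _ _ _ (fun b => (a, b)) h); last exact: hc.
exact: cvg_pair (cvg_cst a) cvg_id.
Qed.

Lemma accessible_local_base_eq {X : topologicalType} {B : set (set X)} {x y : X} :
  accessible_space X -> (forall V, nbhs x V -> exists2 U, B U & U `<=` V) ->
  (forall U, B U -> U y) -> y = x.
Proof.
move=> XT1 Bbase By; apply: contrapT => /eqP yx.
have [W [Wo Wx nWy]] := XT1 x y ltac:(by rewrite eq_sym).
have [U BU UW] := Bbase W (open_nbhs_nbhs (conj Wo (set_mem Wx))).
exact: (set_mem nWy) (UW _ (By U BU)).
Qed.

Definition pseudocharacter_at_le {X : topologicalType} (K : Type) (x : X) :=
  exists g : set (set X), g #<= [set: K] /\ (forall U, g U -> open U /\ U x) /\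
    \bigcap_(U in g) U = [set x].

Section TransitiveEffectiveAction.
Context {G X : topologicalType} {mul : G -> G -> G} {inv : G -> G} {one : G}
  {act : G -> X -> X}.
Hypothesis Ggrp : is_topological_group mul inv one.

Lemma pseudocharacter_le_at_one (K : Type) :
  pseudocharacter_at_le K one -> pseudocharacter_le G K.
Proof.
case: Ggrp => massoc munit minv mcont _ [g [gK [gone gcap]]] z.
pose tr (V : set G) := [set y | V (mul (inv z) y)].
exists (tr @` g); split; [|split].
- exact: card_le_trans (card_image_le _ _) gK.
- move=> _ [V gV <-]; have [Vo V1] := gone V gV; split.
    by apply: open_comp Vo => y _; exact: continuous_sectionr (inv z) mcont y.
  by rewrite /tr /= (minv z).1.
- apply/seteqP; split=> y; last first.
    by move=> -> _ [V gV <-]; rewrite /tr /= (minv z).1; exact: (gone V gV).2.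
  move=> ytr; have : (\bigcap_(V in g) V) (mul (inv z) y).
    by move=> V gV; exact: ytr (tr V) (imageP _ gV).
  rewrite gcap => /= zy1.
  by rewrite -[y](munit y).1 -(minv z).2 -massoc zy1 (munit z).2.
Qed.

Hypotheses (Xact : is_continuous_action mul one act) (eff : effective_action one act)
  (trans : transitive_action act).

Lemma act_invK b : cancel (act b) (act (inv b)).
Proof.
by case: Ggrp Xact => _ _ minv _ _ [act1 actM _] x; rewrite -actM (minv b).1 act1.
Qed.

Lemma conj_fix_eq_one (x0 : X) g :
  (forall b, act (mul (mul b g) (inv b)) x0 = x0) -> g = one.
Proof.
case: Xact => _ actM _ fix_conj; apply: eff => x.
have [b bx] := trans x x0.
have := fix_conj b; rewrite !actM -bx act_invK => /(congr1 (act (inv b))).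
by rewrite !act_invK.
Qed.

Lemma transitive_action_pseudocharacter_at_one (K : Type) (x0 : X) :
  infinite_set [set: K] -> accessible_space X -> character_le X K ->
  invariance_le mul inv one K -> pseudocharacter_at_le K one.
Proof.
move=> Kinf XT1 /(_ x0)[B [BK [Bo Bbase]]] invK.
case: Xact => act1 _ actc.
pose W U := [set g | U (act g x0)].
have WU U : B U -> nbhs one (W U).
  move=> BU; have [Uo Ux0] := Bo U BU.
  apply: (continuous_sectionl x0 actc one); rewrite /= act1.
  exact: open_nbhs_nbhs.
have [gam gamP] := choice_in set0 (fun U BU => invK _ (WU U BU)).
pose Q := [set p : set X * set G | B p.1 /\ gam p.1 p.2].
have Qone p : Q p -> (interior p.2) one.
  by case: p => U V [/= BU gV]; have [_ [Vone _]] := gamP U BU; exact: Vone V gV.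
exists ((fun p => interior p.2) @` Q); split; [|split].
- apply: card_le_trans (card_image_le _ _) _.
  exact: card_le_sigma Kinf BK (fun U BU => (gamP U BU).1).
- by move=> _ [p Qp <-]; split; [exact: open_interior | exact: Qone].
- apply/seteqP; split=> g; last by move=> -> _ [p Qp <-]; exact: Qone.
  move=> gQ; apply: (conj_fix_eq_one x0) => b.
  apply: (accessible_local_base_eq XT1 Bbase) => U BU.
  have [_ [_ /(_ b)[V gV /(_ g)]]] := gamP U BU; apply; apply: interior_subset.
  by apply: gQ; exists (U, V).
Qed.

End TransitiveEffectiveAction.

Theorem corollary3p10 (K : Type) (X G : topologicalType)
    (mul : G -> G -> G) (inv : G -> G) (one : G) (act : G -> X -> X) :
  infinite_set [set: K] ->
  tychonoff_space X -> tychonoff_space G ->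
  character_le X K ->
  is_topological_group mul inv one ->
  ~ pseudocharacter_le G K ->
  invariance_le mul inv one K ->
  ~ [/\ is_continuous_action mul one act,
        effective_action one act &
        transitive_action act].
Proof.
move=> Kinf [XT1 _] _ chX Ggrp npsi invK [Xact eff trans].
apply/npsi/(pseudocharacter_le_at_one Ggrp).
have [[x0 _]|noX] := pselect (exists x : X, True).
  exact: transitive_action_pseudocharacter_at_one Ggrp Xact eff trans K x0 Kinf XT1 chX invK.
exists set0; split; first exact: card_ge0.
split=> //; rewrite bigcap_set0; apply/esym/seteqP; split=> // g _.
by apply: eff => x; case: noX; exists x.
Qed.
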